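(* Let $n_1,m_1\ge1$, $M\ge n_1+m_1$ and $c_1\ge0$ be integers. Let $T$ be the rooted tree consisting of a path of $M-m_1-n_1$ edges from the root down to a vertex $A$, followed below $A$ by two branches: a left path of $n_1$ edges ending at a leaf of capacity $c_1$, and a right path of $m_1$ edges ending at a leaf of capacity $c_2=c_1+n_1$. Let $T'$ be a path of $M$ edges from the root ending at a leaf of capacity $c_1$. Then $$G(T)=\genfrac{[}{]}{0pt}{}{n_1+m_1}{n_1}\,G(T').$$
   Context: $[n]=\sum_{i=0}^{n-1}q^i$, $[n]!=\prod_{i=1}^n[i]$, $\genfrac{[}{]}{0pt}{}{n}{k}=[n]!/([k]![n-k]!)$. For a rooted tree whose leaves carry non-negative integer capacities, a labelling of Lascoux--Sch\''utzenberger type is an assignment of non-negative integers to edges such that labels are weakly increasing along every path going away from the root, and the label of the edge incident to each leaf is at most that leaf's capacity. $G(T)=\sum q^{\text{(sum of labels)}}$ over all such labellings. *)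

From mathcomp Require Import all_boot all_algebra.
Set Implicit Arguments. Unset Strict Implicit. Unset Printing Implicit Defensive.
Import GRing.Theory.
Local Open Scope ring_scope.

Definition qint (n : nat) : {poly rat} := \sum_(i < n) 'X^i.
Definition qfact (n : nat) : {poly rat} := \prod_(1 <= i < n.+1) qint i.
Definition qbinom (n k : nat) : {poly rat} := qfact n %/ (qfact k * qfact (n - k)).

(* A tree denotes its root vertex together with the subtrees hanging below it;
   each element of the child list is joined to the vertex by one edge.
   [Leaf c] is a leaf vertex carrying capacity c. *)
Inductive tree : Type :=
| Leaf of nat
| Node of seq tree.

Inductive ltree : Type :=
| LLeaf
| LNode of seq (nat * ltree).

Fixpoint labs (B : nat) (t : tree) : seq ltree :=
  match t with
  | Leaf _ => [:: LLeaf]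
  | Node ts =>
      let fix go (ts : seq tree) : seq (seq (nat * ltree)) :=
        match ts with
        | [::] => [:: [::]]
        | t' :: ts' =>
            [seq p :: r | p <- [seq (a, l) | a <- iota 0 B.+1, l <- labs B t'],
                          r <- go ts']
        end in
      map LNode (go ts)
  end.

(* [lsub t L a]: L is a labelling of (the edges below the root of) t, where the
   edge joining t to its parent has label a; labels weakly increase going away
   from the root, and the label of an edge incident to a leaf of capacity c is
   at most c. *)
Fixpoint lsub (t : tree) (L : ltree) (a : nat) {struct t} : bool :=
  match t, L with
  | Leaf c, LLeaf => (a <= c)%N
  | Node ts, LNode ls =>
      let fix go (ts : seq tree) (ls : seq (nat * ltree)) : bool :=
        match ts, ls with
        | [::], [::] => true
        | t' :: ts', (b, L') :: ls' => [&& (a <= b)%N, lsub t' L' b & go ts' ls']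
        | _, _ => false
        end in
      go ts ls
  | _, _ => false
  end.

(* Lascoux--Schuetzenberger labellings of the rooted tree t (there is no edge
   above the root, so the lower bound there is the trivial bound 0). *)
Definition LS_labelling (t : tree) (L : ltree) : bool := lsub t L 0.

Fixpoint wt (L : ltree) : nat :=
  match L with
  | LLeaf => 0
  | LNode ls =>
      let fix go (ls : seq (nat * ltree)) : nat :=
        match ls with
        | [::] => 0
        | (b, L') :: ls' => b + wt L' + go ls'
        end in
      go ls
  end.

(* maximal leaf capacity: every label of an LS labelling of a tree all of whose
   maximal downward paths end in a capacitated leaf is bounded by it. *)
Fixpoint maxcap (t : tree) : nat :=
  match t with
  | Leaf c => c
  | Node ts =>
      let fix go (ts : seq tree) : nat :=
        match ts with
        | [::] => 0
        | t' :: ts' => maxn (maxcap t') (go ts')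
        end in
      go ts
  end.

Definition G (t : tree) : {poly rat} :=
  \sum_(L <- labs (maxcap t) t | LS_labelling t L) 'X^(wt L).

Fixpoint chain (k : nat) (t : tree) : tree :=
  match k with
  | 0 => t
  | k'.+1 => Node [:: chain k' t]
  end.

Definition treeT (M n1 m1 c1 : nat) : tree :=
  chain (M - m1 - n1)
    (Node [:: chain n1.-1 (Leaf c1); chain m1.-1 (Leaf (c1 + n1))]).

Definition treeT' (M c1 : nat) : tree := chain M (Leaf c1).

From mathcomp Require Import all_boot all_algebra ring zify.
Import GRing.Theory.
Local Open Scope ring_scope.

(* Labellings of a tree hanging below an edge labelled a factor over the
   children of its root, each child contributing a sum over the label of its
   own edge. Hence a path of k edges ending at a leaf of capacity c >= a
   contributes q^(k a) [k + c - a choose k]. At the fork A, with lower bound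
   a = c - d, the two branches contribute
   q^((n + m) a) [n + d choose n] [m + d + n choose m], and the identity
     [n + d choose n] [m + d + n choose m] = [n + m choose n] [n + m + d choose d]
   (checked on q-factorials) shows that the fork behaves like a single path of
   n + m edges ending at capacity c, scaled by [n + m choose n]. The path above
   A only lengthens this path to M edges. *)

Definition Glow (B : nat) (t : tree) (a : nat) : {poly rat} :=
  \sum_(L <- labs B t | lsub t L a) 'X^(wt L).

Definition lchildren (L : ltree) : seq (nat * ltree) :=
  if L is LNode ls then ls else [::].

Definition edge_sum (B a : nat) (f : nat -> {poly rat}) : {poly rat} :=
  \sum_(0 <= b < B.+1 | (a <= b)%N) 'X^b * f b.

Lemma labs_Node_cons B t ts :
  labs B (Node (t :: ts)) =
  map LNode [seq p :: r | p <- [seq (x, l) | x <- iota 0 B.+1, l <- labs B t],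
                         r <- map lchildren (labs B (Node ts))].
Proof. by rewrite [in RHS]/= (mapK (fun ls => erefl : lchildren (LNode ls) = ls)). Qed.

Lemma labs_NodeE B ts : labs B (Node ts) = map LNode (map lchildren (labs B (Node ts))).
Proof. by rewrite [in map lchildren _]/= (mapK (fun ls => erefl : lchildren (LNode ls) = ls)). Qed.

Lemma lsub_Node_cons t ts b L ls a :
  lsub (Node (t :: ts)) (LNode ((b, L) :: ls)) a =
  [&& (a <= b)%N, lsub t L b & lsub (Node ts) (LNode ls) a].
Proof. by []. Qed.

Lemma wt_LNode_cons b L ls : wt (LNode ((b, L) :: ls)) = (b + wt L + wt (LNode ls))%N.
Proof. by []. Qed.

Lemma Glow_NodeE B ts a :
  Glow B (Node ts) a =
  \sum_(r <- map lchildren (labs B (Node ts)) | lsub (Node ts) (LNode r) a) 'X^(wt (LNode r)).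
Proof. by rewrite /Glow [in LHS]labs_NodeE big_map. Qed.

Lemma Glow_Node_cons B t ts a :
  Glow B (Node (t :: ts)) a = edge_sum B a (Glow B t) * Glow B (Node ts) a.
Proof.
rewrite {1}/Glow labs_Node_cons big_map big_mkcond !big_allpairs_dep.
rewrite big_distrl [RHS]big_mkcond /index_iota subn0; apply: eq_bigr => x _.
case: leqP => hx; last first.
  by apply: big1 => l _; apply: big1 => r _; rewrite lsub_Node_cons leqNgt hx.
rewrite [RHS]/= -mulrA {1}/Glow big_distrl mulr_sumr [RHS]big_mkcond; apply: eq_bigr => l _.
case: (boolP (lsub t l x)) => hl; last first.
  by apply: big1 => r _; rewrite lsub_Node_cons hx (negbTE hl).
rewrite [RHS]/= Glow_NodeE !mulr_sumr [RHS]big_mkcond; apply: eq_bigr => r _.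
by rewrite lsub_Node_cons hx hl wt_LNode_cons !exprD mulrA.
Qed.

Lemma Glow_Node B ts a :
  Glow B (Node ts) a = \prod_(t <- ts) edge_sum B a (Glow B t).
Proof.
elim: ts => [|t ts IH]; first by rewrite big_nil /Glow /= big_cons big_nil /= addr0.
by rewrite Glow_Node_cons IH big_cons.
Qed.

Lemma Glow_Node1 B t a : Glow B (Node [:: t]) a = edge_sum B a (Glow B t).
Proof. by rewrite Glow_Node big_seq1. Qed.

Lemma Glow_Leaf B c a : Glow B (Leaf c) a = if (a <= c)%N then 1 else 0.
Proof. by rewrite /Glow /= big_cons big_nil /=; case: ifP; rewrite ?addr0. Qed.

Lemma edge_sum_trunc B a c f : (c <= B)%N -> (forall b, (c < b)%N -> f b = 0) ->
  edge_sum B a f = \sum_(a <= b < c.+1) 'X^b * f b.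
Proof.
move=> cB f0; rewrite /edge_sum (big_nat_widenl a 0) // (big_nat_widen 0 c.+1 B.+1) //.
rewrite [LHS]big_mkcond [RHS]big_mkcond; apply: eq_bigr => b _ /=.
by case: (a <= b)%N => //=; case: ltnP => // cb; rewrite f0 ?mulr0.
Qed.

(* [pathG k a c] sums q^(b_1 + ... + b_k) over a <= b_1 <= ... <= b_k <= c: the
   labellings of a path of k edges ending at a leaf of capacity c, hanging
   below an edge labelled a. *)
Fixpoint pathG (k a c : nat) : {poly rat} :=
  if k is k'.+1 then \sum_(a <= b < c.+1) 'X^b * pathG k' b c
  else if (a <= c)%N then 1 else 0.

Lemma pathG_eq0 k a c : (c < a)%N -> pathG k a c = 0.
Proof. by case: k => [|k] ca /=; [rewrite leqNgt ca | rewrite big_geq]. Qed.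

Lemma pathGSS k a c : pathG k a.+1 c.+1 = 'X^k * pathG k a c.
Proof.
elim: k a => [|k IH] a /=; first by rewrite ltnS mul1r.
rewrite big_add1 mulr_sumr; apply: eq_bigr => b _.
by rewrite IH !mulrA -!exprD !addSn addnC.
Qed.

Lemma pathG_shift k a d : pathG k a (a + d) = 'X^(k * a) * pathG k 0 d.
Proof.
elim: a => [|a IH]; first by rewrite muln0 mul1r.
by rewrite addSn pathGSS IH mulrA -exprD mulnS.
Qed.

Lemma pathG_00 k : pathG k 0 0 = 1.
Proof. by elim: k => [|k IH] //=; rewrite big_nat1 mul1r. Qed.

Lemma pathG_pascal k d : pathG k.+1 0 d.+1 = pathG k 0 d.+1 + 'X^(k.+1) * pathG k.+1 0 d.
Proof. by rewrite -pathGSS /= big_ltn // mul1r. Qed.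

Lemma qintD a b : qint (a + b) = qint a + 'X^a * qint b.
Proof.
rewrite /qint big_split_ord mulr_sumr; congr (_ + _).
by apply: eq_bigr => i _; rewrite exprD.
Qed.

Lemma qfact0 : qfact 0 = 1.
Proof. by rewrite /qfact big_geq. Qed.

Lemma qfactS n : qfact n.+1 = qfact n * qint n.+1.
Proof. by rewrite /qfact big_nat_recr. Qed.

Lemma qintS_neq0 n : qint n.+1 != 0.
Proof.
apply/eqP => /(congr1 (horner^~ 1)).
rewrite /qint horner_sum hornerC.
under eq_bigr => i _ do rewrite hornerXn expr1n.
by rewrite sumr_const card_ord => /eqP; rewrite Num.Theory.pnatr_eq0.
Qed.

Lemma qfact_neq0 n : qfact n != 0.
Proof.
elim: n => [|n IH]; first by rewrite qfact0 oner_eq0.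
by rewrite qfactS mulf_neq0 ?qintS_neq0.
Qed.

Lemma pathG_qfact k d : pathG k 0 d * qfact k * qfact d = qfact (k + d).
Proof.
elim: k d => [|k IHk] d; first by rewrite qfact0 !mul1r.
elim: d => [|d IHd]; first by rewrite pathG_00 qfact0 mul1r mulr1 addn0.
transitivity ((pathG k 0 d.+1 * qfact k * qfact d.+1) * qint k.+1 +
  'X^(k.+1) * (pathG k.+1 0 d * qfact k.+1 * qfact d) * qint d.+1).
  by rewrite pathG_pascal (qfactS k) (qfactS d); ring.
rewrite IHk IHd !addnS !addSn (qfactS (k + d).+1).
have -> : qint (k + d).+2 = qint k.+1 + 'X^(k.+1) * qint d.+1 by rewrite -qintD addSn addnS.
ring.
Qed.

Lemma qbinomE n m : qbinom (n + m) n = pathG n 0 m.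
Proof.
by rewrite /qbinom addKn -pathG_qfact -mulrA mulpK // mulf_neq0 ?qfact_neq0.
Qed.

(* Both sides equal [n + m + d]! / ([n]! [m]! [d]!). *)
Lemma pathG0_mul n m d : pathG n 0 d * pathG m 0 (d + n) = pathG n 0 m * pathG (n + m) 0 d.
Proof.
have qf_neq0 : qfact n * qfact m * qfact d * qfact (d + n) != 0.
  by rewrite !mulf_neq0 ?qfact_neq0.
apply: (mulIf qf_neq0).
transitivity ((pathG n 0 d * qfact n * qfact d) * (pathG m 0 (d + n) * qfact m * qfact (d + n))).
  by ring.
transitivity ((pathG (n + m) 0 d * (pathG n 0 m * qfact n * qfact m) * qfact d) * qfact (d + n)).
  by rewrite !pathG_qfact mulrC; congr (qfact _ * qfact _); lia.
by ring.
Qed.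

Lemma pathG_mul n m a c : pathG n a c * pathG m a (c + n) = pathG n 0 m * pathG (n + m) a c.
Proof.
have [ac | ca] := leqP a c; last first.
  by rewrite (pathG_eq0 n _ _ ca) (pathG_eq0 (n + m) _ _ ca) mul0r mulr0.
rewrite -(subnKC ac) -addnA; move: (c - a)%N => d.
rewrite (pathG_shift n) (pathG_shift m) (pathG_shift (n + m)) mulnDl exprD.
transitivity ('X^(n * a) * 'X^(m * a) * (pathG n 0 d * pathG m 0 (d + n))); first by ring.
by rewrite pathG0_mul; ring.
Qed.

Lemma maxcap_chain k t : maxcap (chain k t) = maxcap t.
Proof. by elim: k => //= k ->; rewrite maxn0. Qed.

Lemma Glow_chain B k t K j c a : (c <= B)%N ->
  (forall b, Glow B t b = K * pathG j b c) ->
  Glow B (chain k t) a = K * pathG (k + j) a c.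
Proof.
move=> cB Gt; elim: k a => [|k IH] a /=; first exact: Gt.
rewrite Glow_Node1 (edge_sum_trunc _ _ _ _ cB); last first.
  by move=> b cb; rewrite IH pathG_eq0 ?mulr0.
by rewrite mulr_sumr; apply: eq_bigr => b _; rewrite IH mulrCA.
Qed.

Lemma Glow_path B k c a : (c <= B)%N -> Glow B (chain k (Leaf c)) a = pathG k a c.
Proof.
move=> cB; rewrite (Glow_chain _ _ _ 1 0 _ _ cB) ?mul1r ?addn0 // => b.
by rewrite Glow_Leaf mul1r.
Qed.

Lemma Glow_fork B n m c a : (0 < n)%N -> (0 < m)%N -> (c + n <= B)%N ->
  Glow B (Node [:: chain n.-1 (Leaf c); chain m.-1 (Leaf (c + n))]) a =
  pathG n 0 m * pathG (n + m) a c.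
Proof.
move=> n0 m0 cnB; have cB : (c <= B)%N by apply: leq_trans cnB; rewrite leq_addr.
rewrite Glow_Node big_cons big_seq1 -!Glow_Node1 -!/(chain _.+1 _).
by rewrite !prednK // !Glow_path // pathG_mul.
Qed.

Lemma G_Glow t : G t = Glow (maxcap t) t 0.
Proof. by []. Qed.

Theorem mainTheorem9 (n1 m1 M c1 : nat) :
  (1 <= n1)%N -> (1 <= m1)%N -> (n1 + m1 <= M)%N ->
  G (treeT M n1 m1 c1) = qbinom (n1 + m1) n1 * G (treeT' M c1).
Proof.
move=> n0 m0 nmM.
have capT : maxcap (treeT M n1 m1 c1) = (c1 + n1)%N.
  by rewrite /treeT maxcap_chain /= !maxcap_chain maxn0; apply/maxn_idPr/leq_addr.
rewrite !G_Glow capT /treeT /treeT' maxcap_chain Glow_path //.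
rewrite (Glow_chain _ _ _ (pathG n1 0 m1) (n1 + m1) c1 _ (leq_addr n1 c1)) => [|b].
  by rewrite qbinomE; congr (_ * pathG _ _ _); lia.
exact: Glow_fork.
Qed.
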